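(* Let $\gamma\in\Gamma$, $d=e_1+\varepsilon\gamma$, with orientations chosen so that $Vd\ge0$ for small $\varepsilon\ge0$. If $i\in\{1,\dots,m\}$ satisfies $(Ve_1)_i>0$, then for all $\varepsilon>0$ sufficiently small, $$\big(Vg^*(d)\big)_i<(1+\lambda)(Vd)_i.$$
   Context: $\mathcal G$ is a simple connected oriented graph with nodes $\{1,\dots,n\}$, $m$ edges, incidence matrix $C$, PTDF matrix $V=C(C^TC)^+$; $e$ all-ones; $\lambda\in(0,1)$. $\Gamma=\{\gamma\in\mathbb R^n:\gamma_1=0,\gamma\ge0,e^T\gamma=1\}$. $g^*(d)$ is the unique minimizer of $\frac12\sum_ig_i^2$ over $g\in\mathbb R^n_{\ge0}$ with $e^Tg=e^Td$ and $-\lambda|Vd|\le V(d-g)\le\lambda|Vd|$. *)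

From HB Require Import structures.
From mathcomp Require Import all_boot all_order all_algebra.
From mathcomp Require Import reals.
Set Implicit Arguments. Unset Strict Implicit. Unset Printing Implicit Defensive.
Import Order.TTheory GRing.Theory Num.Theory.
Local Open Scope ring_scope.

Definition simple_graph (N m : nat) (src dst : 'I_m -> 'I_N) : Prop :=
  (forall k, src k != dst k) /\
  (forall k l, k != l -> [set src k; dst k] != [set src l; dst l]).

Definition adj (N m : nat) (src dst : 'I_m -> 'I_N) : rel 'I_N :=
  fun a b => [exists k, ((src k == a) && (dst k == b)) || ((src k == b) && (dst k == a))].

Definition connected_graph (N m : nat) (src dst : 'I_m -> 'I_N) : Prop :=
  forall a b, connect (adj src dst) a b.

Definition incidence (R : ringType) (N m : nat) (src dst : 'I_m -> 'I_N)
  : 'M[R]_(m, N) :=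
  \matrix_(k, j) ((j == src k)%:R - (j == dst k)%:R).

Definition is_pinv (R : ringType) (p q : nat) (A : 'M[R]_(p, q)) (X : 'M[R]_(q, p))
  : Prop :=
  [/\ A *m X *m A = A, X *m A *m X = X, (A *m X)^T = A *m X & (X *m A)^T = X *m A].

Definition absv (R : numDomainType) (p : nat) (v : 'cV[R]_p) : 'cV[R]_p :=
  map_mx (fun x => `|x|) v.

Definition esum (R : ringType) (p : nat) (v : 'cV[R]_p) : R := \sum_j v j 0.

Definition feasible (R : realFieldType) (N m : nat) (V : 'M[R]_(m, N))
  (lambda : R) (d g : 'cV[R]_N) : Prop :=
  [/\ (forall j, 0 <= g j 0), esum g = esum d &
      forall k, - (lambda * absv (V *m d) k 0) <= (V *m (d - g)) k 0
                /\ (V *m (d - g)) k 0 <= lambda * absv (V *m d) k 0].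

Definition objective (R : realFieldType) (N : nat) (g : 'cV[R]_N) : R :=
  2^-1 * \sum_j (g j 0) ^+ 2.

Definition is_gstar (R : realFieldType) (N m : nat) (V : 'M[R]_(m, N))
  (lambda : R) (d g : 'cV[R]_N) : Prop :=
  feasible V lambda d g /\
  forall h, feasible V lambda d h -> objective g <= objective h.

(* Gamma, with node 1 = ord0 *)
Definition in_Gamma (R : realFieldType) (n : nat) (gam : 'cV[R]_n.+1) : Prop :=
  [/\ gam ord0 0 = 0, (forall j, 0 <= gam j 0) & esum gam = 1].

Definition e1 (R : ringType) (n : nat) : 'cV[R]_n.+1 := delta_mx ord0 0.

From HB Require Import structures.
From mathcomp Require Import all_boot all_order all_algebra.
From mathcomp Require Import reals.
From mathcomp Require Import ring lra.
Set Implicit Arguments. Unset Strict Implicit. Unset Printing Implicit Defensive.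
Import Order.TTheory GRing.Theory Num.Theory.
Local Open Scope ring_scope.

(* Write [d = e_1 + eps gam] and compare [g := g^*(d)] with the feasible point
   [g_c = (1 - lambda) d + (lambda e^T d / (n+1)) e], whose flows are
   [(1 - lambda) V d] since [V e = 0].  Optimality of [g] gives
   [|g - g_c|^2 <= 2 <g_c, g_c - g>], and the right-hand side is [O(eps)]:
   [g_c - g] has zero sum, its mass against [gam] is at most [e^T d], and its
   entry at node 1 is read off through [C^T V = I] (on zero-sum vectors) from
   the flows on the edges into node 1, which are [O(eps)] because the potential
   [P e_1] is maximal at node 1.  Hence [(V g)_i = (1 - lambda) (V d)_i +
   O(sqrt eps)], below [(1 + lambda) (V d)_i] for small [eps] as
   [(V e_1)_i > 0]. *)

Lemma sumr_indicator (R : nzRingType) (N : nat) (a : 'I_N) (x : 'I_N -> R) :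
  \sum_j (j == a)%:R * x j = x a.
Proof.
rewrite (bigD1 a) //= eqxx mul1r big1 ?addr0 // => j /negbTE ->; exact: mul0r.
Qed.

Section Esum.
Variables (R : nzRingType) (N : nat).
Implicit Types (u v : 'cV[R]_N).

Lemma esumD u v : esum (u + v) = esum u + esum v.
Proof. by rewrite /esum -big_split; apply: eq_bigr => j _; rewrite mxE. Qed.

Lemma esumN u : esum (- u) = - esum u.
Proof. by rewrite /esum -sumrN; apply: eq_bigr => j _; rewrite mxE. Qed.

Lemma esumB u v : esum (u - v) = esum u - esum v.
Proof. by rewrite esumD esumN. Qed.

Lemma esumZ c u : esum (c *: u) = c * esum u.
Proof. by rewrite /esum mulr_sumr; apply: eq_bigr => j _; rewrite mxE. Qed.

Lemma esum_const c : esum (const_mx c : 'cV[R]_N) = c *+ N.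
Proof.
by rewrite /esum (eq_bigr (fun=> c)) ?sumr_const ?card_ord // => j _; rewrite mxE.
Qed.

Lemma esum_delta a : esum (delta_mx a 0 : 'cV[R]_N) = 1.
Proof.
rewrite /esum (eq_bigr (fun j => (j == a)%:R * 1)) ?sumr_indicator // => j _.
by rewrite mxE andbT mulr1.
Qed.

Lemma esumE v : esum v = ((const_mx 1 : 'cV[R]_N)^T *m v) 0 0.
Proof. by rewrite /esum mxE; apply: eq_bigr => j _; rewrite !mxE mul1r. Qed.

End Esum.

Section Incidence.
Variables (R : nzRingType) (N m : nat) (src dst : 'I_m -> 'I_N).
Local Notation C := (incidence R src dst).

Lemma incidence_mulE (x : 'cV[R]_N) k : (C *m x) k 0 = x (src k) 0 - x (dst k) 0.
Proof.
by rewrite mxE; under eq_bigr do rewrite mxE mulrBl; rewrite sumrB !sumr_indicator.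
Qed.

Lemma tr_incidence_mulE (y : 'cV[R]_m) j :
  (C^T *m y) j 0 = \sum_k ((j == src k)%:R - (j == dst k)%:R) * y k 0.
Proof. by rewrite mxE; apply: eq_bigr => k _; rewrite !mxE. Qed.

Lemma incidence_mul_const : C *m (const_mx 1 : 'cV[R]_N) = 0.
Proof. by apply/matrixP => k l; rewrite ord1 incidence_mulE !mxE subrr. Qed.

End Incidence.

Section Laplacian.
Variables (R : realFieldType) (n m : nat) (src dst : 'I_m -> 'I_n.+1).
Hypothesis Hconn : connected_graph src dst.
Local Notation C := (incidence R src dst).
Local Notation L := (C^T *m C).
Local Notation ones := (const_mx 1 : 'cV[R]_n.+1).
Variable P : 'M[R]_n.+1.
Hypothesis HP : is_pinv L P.

(* [z^T L z] is the sum of the squared differences of [z] along the edges. *)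
Lemma laplacian_ker_const (z : 'cV[R]_n.+1) :
  L *m z = 0 -> forall a b, z a 0 = z b 0.
Proof.
move=> Lz.
have energyE : (z^T *m (L *m z)) 0 0 = \sum_k ((C *m z) k 0) ^+ 2.
  rewrite -(mulmxA C^T C z) (mulmxA z^T C^T) -trmx_mul mxE.
  by apply: eq_bigr => k _; rewrite mxE expr2.
have Cz0 k : (C *m z) k 0 = 0.
  apply/eqP; rewrite -sqrf_eq0; apply/eqP.
  move: energyE; rewrite Lz mulmx0 mxE => /esym /eqP.
  rewrite psumr_eq0 => [/allP Hall|j _]; last exact: sqr_ge0.
  by apply/eqP; apply: Hall; rewrite mem_index_enum.
move=> a b.
have level_closed : closed (adj src dst) [pred c | z c 0 == z a 0].
  move=> x y /existsP [k /orP [] /andP [/eqP <- /eqP <-]];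
  by rewrite !inE; move/eqP: (Cz0 k); rewrite incidence_mulE subr_eq0 => /eqP ->.
have := closed_connect level_closed (Hconn a b).
by rewrite !inE eqxx => /esym /eqP.
Qed.

Lemma laplacian_pinvE (x : 'cV[R]_n.+1) :
  L *m P *m x = x - (esum x / n.+1%:R) *: ones.
Proof.
case: HP => LPL _ LP_sym _.
have L_sym : L^T = L by rewrite trmx_mul trmxK.
have L_ones : L *m ones = 0 by rewrite -mulmxA incidence_mul_const mulmx0.
have LP_ones : L *m P *m ones = 0.
  by rewrite -LP_sym trmx_mul L_sym -mulmxA L_ones mulmx0.
have esum_LP y : esum (L *m P *m y) = 0.
  rewrite esumE mulmxA -[ones^T *m _]trmxK trmx_mul trmxK LP_sym LP_ones.
  by rewrite trmx0 mul0mx mxE.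
have L_LP : L *m (L *m P) = L by rewrite -[LHS]trmxK trmx_mul LP_sym L_sym LPL.
set z := x - L *m P *m x.
have Lz : L *m z = 0 by rewrite mulmxBr (mulmxA L (L *m P)) L_LP subrr.
have z_const := laplacian_ker_const Lz.
have esum_z : esum z = n.+1%:R * z ord0 0.
  rewrite /esum (eq_bigr (fun=> z ord0 0)) => [|j _]; last exact: z_const.
  by rewrite sumr_const card_ord mulr_natl.
have zE : z = (esum x / n.+1%:R) *: ones.
  apply/matrixP => a b; rewrite ord1 [RHS]mxE [X in _ * X]mxE mulr1 (z_const a ord0).
  by rewrite -[esum x](subr0 _) -(esum_LP x) -esumB esum_z mulrC mulKf ?pnatr_eq0.
by rewrite -zE /z opprB addrC subrK.
Qed.

Lemma pinv_mul_const : P *m ones = 0.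
Proof.
have [_ PLP _ _] := HP.
have := laplacian_pinvE ones.
rewrite esum_const mulfV ?pnatr_eq0 // scale1r subrr => LP_ones.
by rewrite -PLP -(mulmxA P L P) -mulmxA LP_ones mulmx0.
Qed.

Local Notation V := (C *m P).

Lemma ptdf_mul_const : V *m ones = 0.
Proof. by rewrite -mulmxA pinv_mul_const mulmx0. Qed.

Lemma tr_incidence_ptdf_zero_sum (y : 'cV[R]_n.+1) :
  esum y = 0 -> C^T *m (V *m y) = y.
Proof. by move=> y0; rewrite !mulmxA laplacian_pinvE y0 mul0r scale0r subr0. Qed.

(* The potential [P e_a] is maximal at the injection node [a]: at any other
   maximiser the Laplacian would be nonnegative, not [-1/(n+1)]. *)
Lemma ptdf_delta_in_le0 (a : 'I_n.+1) k :
  dst k = a -> (V *m (delta_mx a 0 : 'cV[R]_n.+1)) k 0 <= 0.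
Proof.
move=> dst_k.
set p := P *m (delta_mx a 0 : 'cV[R]_n.+1).
have LpE := laplacian_pinvE (delta_mx a 0).
rewrite esum_delta mul1r -!mulmxA -/p in LpE.
have [jm _ jm_max] := @arg_maxP _ _ _ ord0 xpredT (fun j => p j 0) isT.
have jm_a : jm = a.
  apply/eqP/negPn/negP => jm_neq_a.
  move/matrixP: LpE => /(_ jm 0).
  rewrite tr_incidence_mulE !mxE (negbTE jm_neq_a) /= add0r mulr1 => LpE.
  have : 0 <= \sum_k ((jm == src k)%:R - (jm == dst k)%:R) * (C *m p) k 0.
    apply: sumr_ge0 => l _; rewrite incidence_mulE.
    case: (jm =P src l) => [<-|_]; case: (jm =P dst l) => [<-|_] /=;
    rewrite ?subrr ?mul0r ?subr0 ?sub0r ?mul1r ?mulN1r ?subr_ge0 ?oppr_ge0 ?subr_le0 //;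
    exact: jm_max.
  by rewrite LpE oppr_ge0 leNgt invr_gt0 ltr0n.
by rewrite -mulmxA -/p incidence_mulE dst_k -jm_a subr_le0; exact: jm_max.
Qed.

End Laplacian.

Lemma objective_le_sqr_dist (R : realFieldType) (N : nat) (g h : 'cV[R]_N) :
  objective g <= objective h ->
  \sum_j (g - h) j 0 ^+ 2 <= 2 * \sum_j h j 0 * (h - g) j 0.
Proof.
rewrite /objective ler_pM2l ?invr_gt0 ?ltr0n //.
have -> : \sum_j g j 0 ^+ 2 =
    \sum_j h j 0 ^+ 2 - 2 * \sum_j h j 0 * (h - g) j 0 + \sum_j (g - h) j 0 ^+ 2.
  rewrite mulr_sumr -sumrB -big_split /=; apply: eq_bigr => j _; rewrite !mxE; ring.
lra.
Qed.

(* Young's inequality [2 t u w <= t^2 u^2 + w^2] with [t = c / (U + 1)]. *)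
Lemma sum_mul_lt_of_sum_sqr (R : realFieldType) (N : nat) (u w : 'I_N -> R) (c : R) :
  0 < c -> (\sum_j w j ^+ 2) * (\sum_j u j ^+ 2 + 1) < c ^+ 2 ->
  \sum_j u j * w j < c.
Proof.
set U := \sum_j u j ^+ 2; set W := \sum_j w j ^+ 2; set T := \sum_j u j * w j.
move=> c_gt0 W_small.
have U_ge0 : 0 <= U by apply: sumr_ge0 => j _; exact: sqr_ge0.
set t := c / (U + 1).
have U1_gt0 : 0 < U + 1 by lra.
have t_gt0 : 0 < t by rewrite divr_gt0.
have tU1 : t * (U + 1) = c by rewrite mulfVK // lt0r_neq0.
have young : 2 * t * T <= t ^+ 2 * U + W.
  have : 0 <= \sum_j (t * u j - w j) ^+ 2 by apply: sumr_ge0 => j _; exact: sqr_ge0.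
  have -> : \sum_j (t * u j - w j) ^+ 2 = t ^+ 2 * U + W - 2 * t * T.
    rewrite /U /W /T !mulr_sumr -big_split -sumrB /=; apply: eq_bigr => j _; ring.
  lra.
have W_lt : W < c * t.
  by rewrite -(ltr_pM2r U1_gt0) -mulrA tU1 -expr2.
have : 2 * t * T < 2 * t * c by nra.
by rewrite ltr_pM2l // mulr_gt0.
Qed.

Section ShrinkDispatch.
Variables (R : realFieldType) (n : nat) (lambda : R) (d : 'cV[R]_n.+1).

(* The comparison point for the optimality of [g^*(d)]: its uniform part is
   invisible to a PTDF matrix. *)
Definition shrink_dispatch : 'cV[R]_n.+1 :=
  (1 - lambda) *: d + (lambda * esum d / n.+1%:R) *: const_mx 1.

Lemma shrink_dispatchE j :
  shrink_dispatch j 0 = (1 - lambda) * d j 0 + lambda * esum d / n.+1%:R.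
Proof. by rewrite !mxE mulr1. Qed.

Lemma esum_shrink_dispatch : esum shrink_dispatch = esum d.
Proof. by rewrite esumD !esumZ esum_const mulfVK ?pnatr_eq0 //; ring. Qed.

Lemma shrink_dispatch_dot (w : 'cV[R]_n.+1) : esum w = 0 ->
  \sum_j shrink_dispatch j 0 * w j 0 = (1 - lambda) * \sum_j d j 0 * w j 0.
Proof.
rewrite /esum => w0; under eq_bigr do rewrite shrink_dispatchE mulrDl -!mulrA.
by rewrite big_split /= -!mulr_sumr w0 !mulr0 addr0.
Qed.

Variables (m : nat) (V : 'M[R]_(m, n.+1)).
Hypothesis V_const : V *m (const_mx 1 : 'cV[R]_n.+1) = 0.

Lemma ptdf_shrink_dispatch : V *m shrink_dispatch = (1 - lambda) *: (V *m d).
Proof. by rewrite mulmxDr -!scalemxAr V_const scaler0 addr0. Qed.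

Lemma ptdf_sub_shrink_dispatch g k :
  (V *m (g - shrink_dispatch)) k 0 = (V *m g) k 0 - (1 - lambda) * (V *m d) k 0.
Proof.
rewrite mulmxBr ptdf_shrink_dispatch; set x := V *m g; set y := V *m d.
by clearbody x y; rewrite !mxE.
Qed.

Hypotheses (lambda_ge0 : 0 <= lambda) (lambda_le1 : lambda <= 1).
Hypothesis Vd_ge0 : forall k, 0 <= (V *m d) k 0.

Lemma feasible_flow_bounds g k : feasible V lambda d g ->
  (1 - lambda) * (V *m d) k 0 <= (V *m g) k 0 <= (1 + lambda) * (V *m d) k 0.
Proof.
case=> _ _ /(_ k); have := Vd_ge0 k.
rewrite mulmxBr; set x := V *m d; set y := V *m g; rewrite !mxE => x_ge0.
rewrite ger0_norm // => -[lo hi]; apply/andP; split; lra.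
Qed.

Hypothesis d_ge0 : forall j, 0 <= d j 0.

Lemma shrink_dispatch_feasible : feasible V lambda d shrink_dispatch.
Proof.
have esum_ge0 : 0 <= esum d by apply: sumr_ge0.
split=> [j | | k]; last 1 first.
- rewrite mulmxBr ptdf_shrink_dispatch; set x := V *m d.
  have x_ge0 : 0 <= x k 0 by exact: Vd_ge0.
  have : 0 <= lambda * x k 0 by exact: mulr_ge0.
  clearbody x; rewrite !mxE ger0_norm //; split; lra.
- by rewrite shrink_dispatchE addr_ge0 ?mulr_ge0 ?invr_ge0 ?subr_ge0.
- exact: esum_shrink_dispatch.
Qed.

End ShrinkDispatch.

Definition l1norm (R : numDomainType) (m : nat) (v : 'cV[R]_m) : R :=
  \sum_k `|v k 0|.

Lemma l1norm_ge0 (R : numDomainType) (m : nat) (v : 'cV[R]_m) : 0 <= l1norm v.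
Proof. by apply: sumr_ge0 => k _; exact: normr_ge0. Qed.

Section PerturbedInjection.
Variables (R : realFieldType) (n m : nat) (src dst : 'I_m -> 'I_n.+1).
Hypothesis Hconn : connected_graph src dst.
Variable P : 'M[R]_n.+1.
Hypothesis HP : is_pinv ((incidence R src dst)^T *m incidence R src dst) P.
Variables (lambda : R) (gam : 'cV[R]_n.+1).
Hypotheses (lambda_gt0 : 0 < lambda) (lambda_lt1 : lambda < 1).
Hypothesis Hgam : in_Gamma gam.

Local Notation V := (incidence R src dst *m P).
Local Notation d eps := (e1 R n + eps *: gam).

Lemma perturbedE eps j : (d eps) j 0 = (j == ord0)%:R + eps * gam j 0.
Proof. by rewrite !mxE andbT. Qed.

Lemma perturbed_ge0 eps j : 0 <= eps -> 0 <= (d eps) j 0.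
Proof.
by case: Hgam => _ gam_ge0 _ eps_ge0; rewrite perturbedE addr_ge0 ?ler0n ?mulr_ge0.
Qed.

Lemma esum_perturbed eps : esum (d eps) = 1 + eps.
Proof. by case: Hgam => _ _ gam1; rewrite esumD esumZ esum_delta gam1 mulr1. Qed.

Lemma ptdf_perturbedE eps k :
  (V *m d eps) k 0 = (V *m e1 R n) k 0 + eps * (V *m gam) k 0.
Proof.
rewrite mulmxDr -scalemxAr; set x := V *m e1 R n; set y := V *m gam.
by clearbody x y; rewrite !mxE.
Qed.

Lemma ptdf_perturbed_in_le eps k : 0 <= eps -> dst k = ord0 ->
  (V *m d eps) k 0 <= eps * `|(V *m gam) k 0|.
Proof.
move=> eps_ge0 /(ptdf_delta_in_le0 Hconn HP) e1_le0; rewrite ptdf_perturbedE.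
have : (V *m e1 R n) k 0 <= 0 := e1_le0.
have := ler_wpM2l eps_ge0 (ler_norm ((V *m gam) k 0)); lra.
Qed.

Section FixedPerturbation.
Variable eps : R.
Hypothesis eps_ge0 : 0 <= eps.
Hypothesis Vd_ge0 : forall k, 0 <= (V *m d eps) k 0.
Local Notation gc := (shrink_dispatch lambda (d eps)).

(* Node 1 can only lose what the edges into it carry, and at [eps = 0] no
   flow enters the injection node. *)
Lemma gstar_node1_lower g : feasible V lambda (d eps) g ->
  (gc - g) ord0 0 <= 2 * eps * l1norm (V *m gam).
Proof.
move=> g_feas.
have V_const := ptdf_mul_const Hconn HP.
have y_sum0 : esum (g - gc) = 0.
  by case: (g_feas) => _ g_sum _; rewrite esumB esum_shrink_dispatch g_sum subrr.
have := tr_incidence_ptdf_zero_sum Hconn HP y_sum0.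
move/matrixP/(_ ord0 0); rewrite tr_incidence_mulE => y0E.
suff : \sum_k - (2 * eps * `|(V *m gam) k 0|) <= (g - gc) ord0 0.
  by rewrite -opprB [(- (gc - g)) ord0 0]mxE sumrN -mulr_sumr /l1norm; lra.
rewrite -y0E; apply: ler_sum => k _.
rewrite ptdf_sub_shrink_dispatch //.
have /andP[lo hi] := feasible_flow_bounds Vd_ge0 k g_feas.
have Vd_k_ge0 := Vd_ge0 k.
have := ler_piMl Vd_k_ge0 (ltW lambda_lt1).
have : 0 <= 2 * eps * `|(V *m gam) k 0| by rewrite !mulr_ge0.
case: (ord0 =P src k) => _; case: (ord0 =P dst k) => [/esym dst_k|_] /=;
  rewrite ?subrr ?mul0r ?subr0 ?sub0r ?mul1r ?mulN1r; try lra.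
have := ptdf_perturbed_in_le eps_ge0 dst_k; lra.
Qed.

Lemma gstar_near_shrink_dispatch g : eps <= 1 ->
  is_gstar V lambda (d eps) g ->
  \sum_j (g - gc) j 0 ^+ 2 <= eps * (4 * l1norm (V *m gam) + 4).
Proof.
move=> eps_le1 [g_feas g_opt].
have [_ gam_ge0 gam1] := Hgam.
have V_const := ptdf_mul_const Hconn HP.
have d_ge0 j : 0 <= (d eps) j 0 by exact: perturbed_ge0.
have gc_feas :=
  shrink_dispatch_feasible V_const (ltW lambda_gt0) (ltW lambda_lt1) Vd_ge0 d_ge0.
have [g_ge0 g_sum _] := g_feas.
have [gc_ge0 _ _] := gc_feas.
have w_sum0 : esum (gc - g) = 0 by rewrite esumB esum_shrink_dispatch g_sum subrr.
have := objective_le_sqr_dist (g_opt _ gc_feas).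
rewrite shrink_dispatch_dot //.
under [X in _ <= _ * (_ * X)]eq_bigr do rewrite perturbedE mulrDl -mulrA.
rewrite big_split /= sumr_indicator -mulr_sumr.
have gam_w : \sum_j gam j 0 * (gc - g) j 0 <= 1 + eps.
  rewrite -(esum_perturbed eps) -(esum_shrink_dispatch lambda); apply: ler_sum => j _.
  have gam_le1 : gam j 0 <= 1 by rewrite -gam1 /esum (bigD1 j) //= lerDl sumr_ge0.
  have -> : (gc - g) j 0 = gc j 0 - g j 0 by rewrite [LHS]mxE [(- g) _ _]mxE.
  have := gc_ge0 j; have := g_ge0 j; have := gam_ge0 j; nra.
have := gstar_node1_lower g_feas; have := ler_wpM2l eps_ge0 gam_w.
set w0 : R := (gc - g) ord0 0; set S := \sum_j gam j 0 * _; set K1 := l1norm _.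
move=> eps_S w0_le.
have K1_ge0 : 0 <= K1 := l1norm_ge0 _.
have eps_sq : 0 <= eps * (1 - eps) by rewrite mulr_ge0 ?subr_ge0.
have bound : w0 + eps * S <= 2 * eps * K1 + 2 * eps by nra.
have : 0 <= lambda * (2 * eps * K1 + 2 * eps) by rewrite !(addr_ge0, mulr_ge0) // ltW.
have := ler_wpM2l (_ : 0 <= 1 - lambda) bound; rewrite subr_ge0 ltW //.
lra.
Qed.

Lemma gstar_flow_deviation_lt g i c : eps <= 1 -> 0 < c ->
  eps * ((\sum_j V i j ^+ 2 + 1) * (4 * l1norm (V *m gam) + 5)) < c ^+ 2 ->
  is_gstar V lambda (d eps) g -> (V *m (g - gc)) i 0 < c.
Proof.
move=> eps_le1 c_gt0 + g_gstar.
have := gstar_near_shrink_dispatch eps_le1 g_gstar.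
set U := \sum_j V i j ^+ 2; set K1 := l1norm _ => dist eps_small.
have U1_ge0 : 0 <= U + 1 by rewrite addr_ge0 // sumr_ge0 // => j _; exact: sqr_ge0.
rewrite mxE; apply: sum_mul_lt_of_sum_sqr => //.
rewrite (le_lt_trans (ler_wpM2r U1_ge0 dist)) //.
have : 0 <= eps * (U + 1) by rewrite mulr_ge0.
nra.
Qed.

End FixedPerturbation.

End PerturbedInjection.

Unset Implicit Arguments.

Theorem mainTheorem10 (R : realType) (n m : nat)
  (src dst : 'I_m -> 'I_n.+1)
  (Hsimple : simple_graph src dst) (Hconn : connected_graph src dst)
  (P : 'M[R]_n.+1)
  (HP : is_pinv ((incidence R src dst)^T *m incidence R src dst) P)
  (lambda : R) (Hl0 : 0 < lambda) (Hl1 : lambda < 1)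
  (gam : 'cV[R]_n.+1) (Hgam : in_Gamma gam)
  (Horient : exists2 eps1 : R, 0 < eps1 &
     forall eps : R, 0 <= eps -> eps <= eps1 ->
       forall k, 0 <= ((incidence R src dst *m P) *m (e1 R n + eps *: gam)) k 0)
  (i : 'I_m) (Hi : 0 < ((incidence R src dst *m P) *m e1 R n) i 0) :
  exists2 eps0 : R, 0 < eps0 &
    forall eps : R, 0 < eps -> eps < eps0 ->
      forall g : 'cV[R]_n.+1,
        is_gstar (incidence R src dst *m P) lambda (e1 R n + eps *: gam) g ->
        ((incidence R src dst *m P) *m g) i 0
          < (1 + lambda) * ((incidence R src dst *m P) *m (e1 R n + eps *: gam)) i 0.
Proof.
case: Horient => eps1 eps1_gt0 Vd_ge0.
set V := incidence R src dst *m P in Vd_ge0 Hi *.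
set a := (V *m e1 R n) i 0 in Hi.
set cg := (V *m gam) i 0; set K1 := l1norm (V *m gam).
set U := \sum_j V i j ^+ 2.
have K1_ge0 : 0 <= K1 := l1norm_ge0 _.
have U_ge0 : 0 <= U by apply: sumr_ge0 => j _; exact: sqr_ge0.
have cg1_gt0 : 0 < `|cg| + 1 by rewrite ltr_wpDl.
exists (Num.min (Num.min 1 eps1)
  (Num.min (a / (2 * (`|cg| + 1))) ((lambda * a) ^+ 2 / ((U + 1) * (4 * K1 + 5))))).
  have : 0 < a / (2 * (`|cg| + 1)) by rewrite divr_gt0 ?mulr_gt0.
  have : 0 < (lambda * a) ^+ 2 / ((U + 1) * (4 * K1 + 5)).
    by rewrite divr_gt0 ?exprn_gt0 ?mulr_gt0 //; lra.
  by rewrite !lt_min ltr01 eps1_gt0 => -> ->.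
move=> eps eps_gt0; rewrite !lt_min => /andP[/andP[eps_lt1 eps_lt_eps1]].
rewrite !ltr_pdivlMr ?mulr_gt0 //; [|lra..] => /andP[eps_small_a eps_small_U] g g_gstar.
have Vd_ge0' := Vd_ge0 eps (ltW eps_gt0) (ltW eps_lt_eps1).
set gc := shrink_dispatch lambda (e1 R n + eps *: gam).
have T_lt : (V *m (g - gc)) i 0 < lambda * a.
  by apply: gstar_flow_deviation_lt; rewrite ?mulr_gt0 // 1?mulrC // ltW.
have Vd_i : a / 2 <= (V *m (e1 R n + eps *: gam)) i 0.
  rewrite ptdf_perturbedE -/a -/cg.
  have := ler_wpM2l (ltW eps_gt0) (ler_norm (- cg)); rewrite normrN; nra.
have := ptdf_sub_shrink_dispatch lambda (e1 R n + eps *: gam)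
  (ptdf_mul_const Hconn HP) g i.
rewrite -/V -/gc; have := ler_wpM2l (ltW Hl0) Vd_i.
lra.
Qed.
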